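(* Let $A$ be an idempotent $\Gamma$-graded ring. For every $M\in A\text{-gr}$ the map $\chi_M:M\to A\cdot\mathrm{HOM}_A(A,M)$ defined by $\chi_M(m)(a)=am$ for $a\in A$ is a graded isomorphism in $A\text{-gr}$, and it is natural in $M$.
   Context: $\Gamma$ is a fixed multiplicative group. Rings are associative $\Gamma$-graded, not necessarily unital; $A$ is idempotent if $A^2=A$. A graded left $A$-module $M$ is unital if $AM=M$ and torsion-free if $Am=0$ implies $m=0$; $A\text{-gr}$ is the category of unital torsion-free graded left $A$-modules with degree-preserving $A$-linear maps. A left $A$-linear map $f:M\to N$ is graded of degree $\sigma$ if $f(M_\tau)\subseteq N_{\tau\sigma}$ for all $\tau$; $\mathrm{HOM}_A(M,N)=\bigoplus_\sigma \mathrm{HOM}_A(M,N)_\sigma$ is graded accordingly. $\mathrm{HOM}_A(A,M)$ is a graded left $A$-module via $(af)(x)=f(xa)$, and $A\cdot\mathrm{HOM}_A(A,M)$ is its submodule of finite sums $\sum a_if_i$. Naturality means: for a morphism $f:M\to N$ in $A\text{-gr}$, composing with $f$ maps $A\cdot\mathrm{HOM}_A(A,M)$ into $A\cdot\mathrm{HOM}_A(A,N)$ and $(f\circ -)\circ\chi_M=\chi_N\circ f$. *)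

From Stdlib Require List.
From HB Require Import structures.
From mathcomp Require Import all_boot all_algebra.
Set Implicit Arguments. Unset Strict Implicit. Unset Printing Implicit Defensive.
Import GRing.Theory.
Local Open Scope ring_scope.

Record mgroup := MGroup {
  gcar :> Type;
  gmul : gcar -> gcar -> gcar;
  gone : gcar;
  ginv : gcar -> gcar;
  gmulA : forall x y z, gmul x (gmul y z) = gmul (gmul x y) z;
  gmul1 : forall x, gmul gone x = x;
  gmulV : forall x, gmul (ginv x) x = gone }.

(* V = (+)_s D s : each D s an additive subgroup, every element a finite sum
   of homogeneous components, and homogeneous components of distinct degrees
   are independent. *)
Definition graded_decomp (G : mgroup) (V : zmodType) (D : G -> V -> Prop) : Prop :=
  (forall s, D s 0) /\
  (forall s x y, D s x -> D s y -> D s (x - y)) /\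
  (forall x : V, exists (l : seq G) (xs : G -> V),
      (forall s, List.In s l -> D s (xs s)) /\ x = \sum_(s <- l) xs s) /\
  (forall (l : seq G) (xs : G -> V), List.NoDup l ->
      (forall s, List.In s l -> D s (xs s)) -> \sum_(s <- l) xs s = 0 ->
      forall s, List.In s l -> xs s = 0).

Record grring (G : mgroup) := GrRing {
  rcar :> zmodType;
  rmul : rcar -> rcar -> rcar;
  rmulA : forall a b c, rmul a (rmul b c) = rmul (rmul a b) c;
  rmulDl : forall a b c, rmul (a + b) c = rmul a c + rmul b c;
  rmulDr : forall a b c, rmul a (b + c) = rmul a b + rmul a c;
  rdeg : G -> rcar -> Prop;
  rdeg_decomp : graded_decomp rdeg;
  rdeg_mul : forall s t a b, rdeg s a -> rdeg t b -> rdeg (gmul s t) (rmul a b) }.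

Record grmod (G : mgroup) (A : grring G) := GrMod {
  mcar :> zmodType;
  act : A -> mcar -> mcar;
  actDl : forall a b m, act (a + b) m = act a m + act b m;
  actDr : forall a m n, act a (m + n) = act a m + act a n;
  actA : forall a b m, act (rmul a b) m = act a (act b m);
  mdeg : G -> mcar -> Prop;
  mdeg_decomp : graded_decomp mdeg;
  mdeg_act : forall s t a m, rdeg s a -> mdeg t m -> mdeg (gmul s t) (act a m) }.

Section Defs.
Variables (G : mgroup) (A : grring G).

Definition idempotent_ring : Prop :=
  forall a : A, exists l : seq (A * A), a = \sum_(p <- l) rmul p.1 p.2.

Definition unital_mod (M : grmod A) : Prop :=
  forall m : M, exists l : seq (A * M), m = \sum_(p <- l) act p.1 p.2.

Definition torsion_free (M : grmod A) : Prop :=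
  forall m : M, (forall a : A, act a m = 0) -> m = 0.

Definition in_Agr (M : grmod A) : Prop := unital_mod M /\ torsion_free M.

Definition gr_morph (M N : grmod A) (f : M -> N) : Prop :=
  (forall x y, f (x + y) = f x + f y) /\
  (forall (a : A) x, f (act a x) = act a (f x)) /\
  (forall s x, mdeg s x -> mdeg s (f x)).

Variable M : grmod A.

Definition left_linear (f : A -> M) : Prop :=
  (forall x y, f (x + y) = f x + f y) /\
  (forall a x, f (rmul a x) = act a (f x)).

Definition hom_deg (s : G) (f : A -> M) : Prop :=
  left_linear f /\ forall (t : G) (x : A), rdeg t x -> mdeg (gmul t s) (f x).

Definition HOM (f : A -> M) : Prop :=
  exists l : seq (G * (A -> M)),
    (forall p, List.In p l -> hom_deg p.1 p.2) /\
    f = (fun x => \sum_(p <- l) p.2 x).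

Definition hom_act (a : A) (f : A -> M) : A -> M := fun x => f (rmul x a).

Definition AHOM (g : A -> M) : Prop :=
  exists l : seq (A * (A -> M)),
    (forall p, List.In p l -> HOM p.2) /\
    g = (fun x => \sum_(p <- l) hom_act p.1 p.2 x).

Definition AHOM_deg (s : G) (g : A -> M) : Prop := AHOM g /\ hom_deg s g.

Definition chi (m : M) : A -> M := fun a => act a m.

End Defs.

(** If [M = A M], write [m = sum_i a_i m_i]; then [chi m = sum_i a_i chi(m_i)], and
    each [chi(m_i)] splits into graded maps along the homogeneous components of
    [m_i], so [chi m] lies in [A . HOM_A(A,M)].  Conversely [g = sum_i a_i f_i]
    equals [chi (sum_i f_i(a_i))] by left linearity of the [f_i], and [chi] is
    injective because [M] is torsion-free.  If [chi m] has degree [s], then [x m]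
    has degree [t s] for every [x] of degree [t]; as [v |-> t v] is injective,
    comparing homogeneous components of [x m] shows that [x] kills every
    component [m_v] with [v <> s], and torsion-freeness forces [m_v = 0]. *)

From Stdlib Require Import ClassicalEpsilon FunctionalExtensionality.
From Stdlib Require List FinFun.
From mathcomp Require Import all_boot all_algebra.
Set Implicit Arguments. Unset Strict Implicit. Unset Printing Implicit Defensive.
Import GRing.Theory.
Local Open Scope ring_scope.

Lemma gmulK (G : mgroup) (t v : G) : gmul (ginv t) (gmul t v) = v.
Proof. by rewrite gmulA gmulV gmul1. Qed.

Lemma gmulI (G : mgroup) (t : G) : injective (gmul t).
Proof. by move=> u v e; rewrite -(gmulK t u) e gmulK. Qed.

Section AdditiveMorphism.
Variables (V W : zmodType) (phi : V -> W).
Hypothesis phiD : {morph phi : x y / x + y}.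

Lemma addmorph0 : phi 0 = 0.
Proof. by apply/eqP; rewrite -(subrr (phi 0)) -{2}(addr0 0) phiD addrK. Qed.

Lemma addmorphN x : phi (- x) = - phi x.
Proof. by apply/eqP; rewrite -addr_eq0 -phiD addNr addmorph0. Qed.

Lemma addmorph_sum (I : Type) (l : seq I) (F : I -> V) :
  phi (\sum_(i <- l) F i) = \sum_(i <- l) phi (F i).
Proof. exact: (big_morph phi phiD addmorph0). Qed.

End AdditiveMorphism.

Definition fupd (T V : Type) (f : T -> V) (s : T) (x : V) : T -> V :=
  fun v => if excluded_middle_informative (v = s) then x else f v.

Lemma fupd_eq (T V : Type) (f : T -> V) s x : fupd f s x s = x.
Proof. by rewrite /fupd; case: excluded_middle_informative. Qed.

Lemma fupd_neq (T V : Type) (f : T -> V) s x v : v <> s -> fupd f s x v = f v.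
Proof. by rewrite /fupd; case: excluded_middle_informative. Qed.

Section ListSums.
Variables (T : Type) (V : zmodType).

Lemma eq_big_In (l : seq T) (F F' : T -> V) :
  (forall i, List.In i l -> F i = F' i) -> \sum_(i <- l) F i = \sum_(i <- l) F' i.
Proof.
elim: l => [|i l IH] h; first by rewrite !big_nil.
rewrite !big_cons h /=; last by left.
by rewrite IH // => j hj; apply: h; right.
Qed.

Lemma sum_fupd_notIn (l : seq T) (F : T -> V) s x :
  ~ List.In s l -> \sum_(v <- l) fupd F s x v = \sum_(v <- l) F v.
Proof.
by move=> hs; apply: eq_big_In => v hv; rewrite fupd_neq // => e; apply: hs; rewrite -e.
Qed.

Lemma sum_fupd_In (l : seq T) (F : T -> V) s x : List.NoDup l -> List.In s l ->
  \sum_(v <- l) fupd F s x v = x - F s + \sum_(v <- l) F v.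
Proof.
elim: l => [|w l IH] //= /List.NoDup_cons_iff [hw hnd] hs; rewrite !big_cons.
have [<-|nws] := excluded_middle_informative (w = s).
  by rewrite fupd_eq sum_fupd_notIn // addrA subrK.
case: hs => [e|hs]; first by case: nws.
by rewrite fupd_neq // IH // addrCA.
Qed.

Lemma sum_NoDup_single (l : seq T) (F : T -> V) s : List.NoDup l -> List.In s l ->
  (forall v, List.In v l -> v <> s -> F v = 0) -> \sum_(v <- l) F v = F s.
Proof.
move=> hnd hs hF.
rewrite (eq_big_In (F' := fupd (fun _ => 0) s (F s))); last first.
  move=> v hv; have [->|nvs] := excluded_middle_informative (v = s).
    by rewrite fupd_eq.
  by rewrite fupd_neq ?hF.
by rewrite sum_fupd_In // big1 // subr0 addr0.
Qed.

End ListSums.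

Section GradedDecomposition.
Variables (G : mgroup) (V : zmodType) (D : G -> V -> Prop).
Hypothesis hD : graded_decomp D.

Definition homogeneous_on (l : seq G) (xs : G -> V) : Prop :=
  forall s, List.In s l -> D s (xs s).

Lemma graded_decomp0 s : D s 0.
Proof. by case: hD. Qed.

Lemma graded_decompB s x y : D s x -> D s y -> D s (x - y).
Proof. by case: hD => _ [hB _]; apply: hB. Qed.

Lemma graded_decompD s x y : D s x -> D s y -> D s (x + y).
Proof.
move=> hx hy; have := graded_decompB hx (graded_decompB (graded_decomp0 s) hy).
by rewrite sub0r opprK.
Qed.

Lemma homogeneous_on_fupd l xs s x :
  (forall v, List.In v l -> v <> s -> D v (xs v)) -> D s x ->
  homogeneous_on l (fupd xs s x).
Proof.
move=> hxs hx v hv; have [->|nvs] := excluded_middle_informative (v = s).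
  by rewrite fupd_eq.
by rewrite fupd_neq //; apply: hxs.
Qed.

Lemma graded_decomp_cons l xs s z :
  List.NoDup l -> homogeneous_on l xs -> D s z ->
  exists l' ys, [/\ List.NoDup l', List.incl (s :: l) l', homogeneous_on l' ys &
    z + \sum_(v <- l) xs v = \sum_(v <- l') ys v].
Proof.
move=> hnd hxs hz; have [hs|hs] := classic (List.In s l).
  exists l, (fupd xs s (z + xs s)); split=> //.
  - by move=> v /= [<-|hv].
  - apply: homogeneous_on_fupd => [v hv _|]; first exact: hxs.
    by apply: graded_decompD => //; apply: hxs.
  - by rewrite sum_fupd_In // addrK.
exists (s :: l), (fupd xs s z); split.
- by constructor.
- exact: List.incl_refl.
- apply: homogeneous_on_fupd => // v /= [<-|hv] // _; exact: hxs.
- by rewrite big_cons fupd_eq sum_fupd_notIn.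
Qed.

Lemma graded_decomp_NoDup (x : V) (s : G) : exists l xs,
  [/\ List.NoDup l, List.In s l, homogeneous_on l xs & x = \sum_(v <- l) xs v].
Proof.
have [_ [_ [hdec _]]] := hD; have [l0 [xs0 [hxs0 ->]]] := hdec x.
elim: l0 hxs0 => [|w l0 IH] hxs0.
  exists [:: s], (fun _ => 0); split => //=; last by rewrite big_nil big_seq1.
  - by constructor; [|constructor].
  - by left.
  - by move=> v _; apply: graded_decomp0.
have [l [xs [hnd hs hxs e]]] := IH (fun v hv => hxs0 v (or_intror hv)).
have [l' [ys [hnd' hincl hys e']]] := graded_decomp_cons hnd hxs (hxs0 w (or_introl erefl)).
by exists l', ys; split => //; [apply: hincl; right | rewrite big_cons e].
Qed.

Lemma homogeneous_sum_component l xs s :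
  List.NoDup l -> List.In s l -> homogeneous_on l xs -> D s (\sum_(v <- l) xs v) ->
  forall v, List.In v l -> v <> s -> xs v = 0.
Proof.
move=> hnd hs hxs hsum v hv nvs; have [_ [_ [_ hind]]] := hD.
rewrite -(fupd_neq xs (xs s - \sum_(w <- l) xs w) nvs).
apply: (hind l _ hnd _ _ v hv).
  apply: homogeneous_on_fupd => [w hw _|]; first exact: hxs.
  by apply: graded_decompB => //; apply: hxs.
by rewrite sum_fupd_In // addrAC subrK subrr.
Qed.

End GradedDecomposition.

Section GradedModule.
Variables (G : mgroup) (A : grring G) (M : grmod A).

Lemma act_sumr (a : A) (I : Type) (l : seq I) (F : I -> M) :
  act a (\sum_(i <- l) F i) = \sum_(i <- l) act a (F i).
Proof. exact: (addmorph_sum (phi := act a) (actDr a)). Qed.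

Lemma act_suml (m : M) (I : Type) (l : seq I) (F : I -> A) :
  act (\sum_(i <- l) F i) m = \sum_(i <- l) act (F i) m.
Proof. by apply: (addmorph_sum (phi := fun a => act a m)) => a b; rewrite actDl. Qed.

Lemma torsion_free_homogeneous (m : M) : torsion_free M ->
  (forall t (y : A), rdeg t y -> act y m = 0) -> m = 0.
Proof.
move=> tf hm; apply: tf => a.
have [_ [_ [hdec _]]] := rdeg_decomp A; have [l [ys [hys ->]]] := hdec a.
rewrite act_suml (eq_big_In (F' := fun _ => 0)) ?big1 // => t ht.
exact: hm (hys t ht).
Qed.

Lemma act_homogeneous_component (m : M) (s t : G) (y : A) l (ms : G -> M) :
  List.NoDup l -> List.In s l -> homogeneous_on (@mdeg G A M) l ms ->
  m = \sum_(v <- l) ms v -> rdeg t y -> mdeg (gmul t s) (act y m) ->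
  forall v, List.In v l -> v <> s -> act y (ms v) = 0.
Proof.
move=> hnd hs hms em hy hym v hv nvs; rewrite -(gmulK t v).
apply: (homogeneous_sum_component (mdeg_decomp M) (l := map (gmul t) l)
  (xs := fun w => act y (ms (gmul (ginv t) w))) (s := gmul t s)).
- exact: FinFun.Injective_map_NoDup (@gmulI G t) hnd.
- exact: List.in_map.
- by move=> w /List.in_map_iff [u [<- hu]]; rewrite gmulK; apply: mdeg_act => //; apply: hms.
- by rewrite big_map; under eq_bigr do rewrite gmulK; rewrite -act_sumr -em.
- exact: List.in_map.
- by move/gmulI.
Qed.

Lemma mdeg_of_homogeneous_act (m : M) (s : G) : torsion_free M ->
  (forall t (y : A), rdeg t y -> mdeg (gmul t s) (act y m)) -> mdeg s m.
Proof.
move=> tf hm.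
have [l [ms [hnd hs hms em]]] := graded_decomp_NoDup (mdeg_decomp M) m s.
have ms_eq0 v : List.In v l -> v <> s -> ms v = 0.
  move=> hv nvs; apply: torsion_free_homogeneous tf _ => t y hy.
  exact: act_homogeneous_component hnd hs hms em hy (hm t y hy) v hv nvs.
by rewrite em (sum_NoDup_single hnd hs ms_eq0); apply: hms.
Qed.

End GradedModule.

Section Chi.
Variables (G : mgroup) (A : grring G) (M : grmod A).

Lemma chiD (m n : M) : chi (m + n) = (fun a => chi m a + chi n a).
Proof. by apply: functional_extensionality => a; rewrite /chi actDr. Qed.

Lemma chi_act (b : A) (m : M) : chi (act b m) = hom_act b (chi m).
Proof. by apply: functional_extensionality => x; rewrite /chi /hom_act actA. Qed.

Lemma chi_left_linear (m : M) : left_linear (chi m).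
Proof. by split=> [x y|a x]; rewrite /chi ?actDl ?actA. Qed.

Lemma chi_hom_deg (s : G) (m : M) : mdeg s m -> hom_deg s (chi m).
Proof. by split=> [|t x hx]; [exact: chi_left_linear | apply: mdeg_act]. Qed.

Lemma chi_HOM (m : M) : HOM (chi m).
Proof.
have [_ [_ [hdec _]]] := mdeg_decomp M; have [l [ms [hms ->]]] := hdec m.
exists (map (fun v => (v, chi (ms v))) l); split.
  by move=> p /List.in_map_iff [v [<- hv]]; apply: chi_hom_deg; apply: hms.
by apply: functional_extensionality => x; rewrite big_map /chi act_sumr.
Qed.

Lemma chi_AHOM (m : M) : unital_mod M -> AHOM (chi m).
Proof.
move=> unitM; have [l ->] := unitM m.
exists (map (fun p => (p.1, chi p.2)) l); split.
  by move=> q /List.in_map_iff [p [<- _]]; apply: chi_HOM.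
apply: functional_extensionality => x.
by rewrite big_map /chi act_sumr; apply: eq_bigr => p _; rewrite /hom_act /= actA.
Qed.

Lemma HOM_rmul (f : A -> M) (a x : A) : HOM f -> f (rmul a x) = act a (f x).
Proof.
move=> [l [hl ->]]; rewrite act_sumr; apply: eq_big_In => p hp.
by have [[_ ->] _] := hl p hp.
Qed.

Lemma AHOM_chi (g : A -> M) : AHOM g -> exists m : M, chi m = g.
Proof.
move=> [l [hl ->]]; exists (\sum_(p <- l) p.2 p.1).
apply: functional_extensionality => x; rewrite /chi act_sumr.
by apply: eq_big_In => p hp; rewrite /hom_act (HOM_rmul _ _ (hl p hp)).
Qed.

Lemma chi_inj : torsion_free M -> injective (@chi G A M).
Proof.
move=> tf m n e; apply/eqP; rewrite -subr_eq0; apply/eqP; apply: tf => a.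
by rewrite actDr (addmorphN (actDr a)) -[act a m]/(chi m a) e subrr.
Qed.

Lemma AHOM_deg_chi (s : G) (g : A -> M) : torsion_free M ->
  AHOM_deg s g -> exists m : M, mdeg s m /\ chi m = g.
Proof.
move=> tf [hg [_ hdeg]]; have [m e] := AHOM_chi hg; exists m; split => //.
by apply: mdeg_of_homogeneous_act tf _ => t x hx; rewrite -[act x m]/(chi m x) e; apply: hdeg.
Qed.

End Chi.

Section Naturality.
Variables (G : mgroup) (A : grring G) (M N : grmod A) (f : M -> N).
Hypothesis hf : gr_morph f.

Lemma hom_deg_comp (s : G) (q : A -> M) : hom_deg s q -> hom_deg s (fun x => f (q x)).
Proof.
have [fD [fA fdeg]] := hf; move=> [[qD qA] qdeg].
by split; [split=> [x y|a x]; rewrite ?qD ?fD ?qA ?fA | move=> t x hx; apply/fdeg/qdeg].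
Qed.

Lemma HOM_comp (q : A -> M) : HOM q -> HOM (fun x => f (q x)).
Proof.
move=> [l [hl ->]]; exists (map (fun p => (p.1, fun x => f (p.2 x))) l); split.
  by move=> r /List.in_map_iff [p [<- hp]]; apply/hom_deg_comp/hl.
by apply: functional_extensionality => x; rewrite big_map (addmorph_sum hf.1).
Qed.

Lemma AHOM_comp (g : A -> M) : AHOM g -> AHOM (fun x => f (g x)).
Proof.
move=> [l [hl ->]]; exists (map (fun p => (p.1, fun x => f (p.2 x))) l); split.
  by move=> r /List.in_map_iff [p [<- hp]]; apply/HOM_comp/hl.
by apply: functional_extensionality => x; rewrite big_map (addmorph_sum hf.1).
Qed.

Lemma chi_natural (m : M) : (fun x => f (chi m x)) = chi (f m).
Proof. by apply: functional_extensionality => x; rewrite /chi hf.2.1. Qed.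

End Naturality.

Theorem proposition3p2 (G : mgroup) (A : grring G) :
  idempotent_ring A ->
  forall M : grmod A, in_Agr M ->
  (* chi_M lands in A . HOM_A(A,M) *)
  (forall m : M, AHOM (chi m)) /\
  (* chi_M is A-linear (for the module structure (a f)(x) = f(x a)) *)
  (forall m n : M, chi (m + n) = (fun a => chi m a + chi n a)) /\
  (forall (b : A) (m : M), chi (act b m) = hom_act b (chi m)) /\
  (* bijective onto A . HOM_A(A,M) *)
  (forall m n : M, chi m = chi n -> m = n) /\
  (forall g : A -> M, AHOM g -> exists m : M, chi m = g) /\
  (* graded: degree-preserving, with degree-preserving inverse *)
  (forall (s : G) (m : M), mdeg s m -> AHOM_deg s (chi m)) /\
  (forall (s : G) (g : A -> M), AHOM_deg s g -> exists m : M, mdeg s m /\ chi m = g) /\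
  (* naturality in M *)
  (forall N : grmod A, in_Agr N -> forall f : M -> N, gr_morph f ->
     (forall g : A -> M, AHOM g -> AHOM (fun x => f (g x))) /\
     (forall m : M, (fun x => f (chi m x)) = chi (f m))).
Proof.
move=> _ M [unitM tfM].
split; first by move=> m; apply: chi_AHOM.
split; first exact: chiD.
split; first exact: chi_act.
split; first exact: chi_inj.
split; first exact: AHOM_chi.
split; first by move=> s m hm; split; [apply: chi_AHOM | apply: chi_hom_deg].
split; first by move=> s g; apply: AHOM_deg_chi.
by move=> N _ f hf; split=> [g|m]; [apply: AHOM_comp | apply: chi_natural].
Qed.
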